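(* Let $W$ be the function on pairs of integers defined as in the context. Let $k \ge 1$ be an integer. Then for all integers $n, m$ with $n \ge m \ge 1$ and $m \le k$, $$W(n,m)\ \ge\ \frac{\sqrt{2k-2}}{k}\cdot\frac{m}{\sqrt{n+m}}.$$
   Context: $W:\mathbb{Z}\times\mathbb{Z}\to[0,1]$ is defined recursively (by induction on $n+m$) as follows: - $W(n,m)=0$ if $m\le 0$; - $W(n,m)=1$ if $m\ge 1$ and $n<m$; - for $n\ge m\ge 1$, $W(n,m)=\frac{n}{n+m}W(n-2,m)+\frac{m}{n+m}W(n-1,m-1)$. $W(n,m)$ is the probability that the mafia wins the mafia game without detectives, started with $n$ civilians and $m$ mafia members, when both sides play uniformly at random. *)

From Stdlib Require Import Reals ZArith Lia Lra.
Open Scope R_scope.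

(* Recursive calls decrease n+m by 2, so fuel Z.to_nat (n+m) always suffices:
   whenever n >= m >= 1 we have n+m >= 2 > 0 and children have n+m-2 <= fuel-1. *)
Fixpoint W_fuel (f : nat) (n m : Z) : R :=
  if (m <=? 0)%Z then 0
  else if (n <? m)%Z then 1
  else match f with
       | O => 0 (* unreachable when f >= n+m *)
       | S f' => (IZR n / IZR (n + m)) * W_fuel f' (n - 2)%Z m
                 + (IZR m / IZR (n + m)) * W_fuel f' (n - 1)%Z (m - 1)%Z
       end.

Definition W (n m : Z) : R := W_fuel (Z.to_nat (n + m)) n m.

From Stdlib Require Import Reals ZArith Lia Lra Psatz.
Open Scope R_scope.

(* Write  B_k(n,m) = sqrt(2k-2)/k * m/sqrt(n+m)  for the claimed bound.  We prove
   B_k(n,m) <= W(n,m) by strong induction on n+m over the larger region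
   0 <= m <= k, m-2 <= n, 1 <= n+m, which is closed under the two moves of the
   recursion (a civilian is lynched: n -> n-2; a mafioso is lynched:
   n,m -> n-1,m-1) as long as n+m >= 3.  On this region:
   - if m = 0 both sides vanish;
   - if n < m then W = 1, and B_k <= 1 reduces to the integer inequality
     (2k-2) m^2 <= k^2 (n+m), i.e. (k-m)((k-1)(m-1)-1) >= 0 for m >= 2;
   - the state (1,1) has W = 1/2, and B_k(1,1) <= 1/2 is (k-2)^2 >= 0;
   - otherwise W satisfies the recursion, and B_k is a subsolution of it:
     this is the elementary inequality  s sqrt(s-2) <= (s-1) sqrt s  for s = n+m. *)

Lemma W_fuel_stable : forall f g n m,
  (Z.to_nat (n + m) <= f)%nat -> (Z.to_nat (n + m) <= g)%nat ->
  W_fuel f n m = W_fuel g n m.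
Proof.
  induction f as [|f IH]; intros [|g] n m Hf Hg; simpl; try reflexivity;
    destruct (m <=? 0)%Z eqn:Hm; try reflexivity;
    destruct (n <? m)%Z eqn:Hn; try reflexivity;
    apply Z.leb_gt in Hm; apply Z.ltb_ge in Hn; try lia.
  rewrite (IH g (n - 2)%Z m), (IH g (n - 1)%Z (m - 1)%Z) by lia.
  reflexivity.
Qed.

Lemma W_no_mafia (n m : Z) : (m <= 0)%Z -> W n m = 0.
Proof.
  intros Hm. unfold W.
  destruct (Z.to_nat (n + m)); simpl; now replace (m <=? 0)%Z with true by lia.
Qed.

Lemma W_mafia_majority (n m : Z) : (1 <= m)%Z -> (n < m)%Z -> W n m = 1.
Proof.
  intros Hm Hn. unfold W.
  destruct (Z.to_nat (n + m)); simpl;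
    now replace (m <=? 0)%Z with false by lia; replace (n <? m)%Z with true by lia.
Qed.

Lemma W_step (n m : Z) : (1 <= m)%Z -> (m <= n)%Z ->
  W n m = IZR n / IZR (n + m) * W (n - 2) m
        + IZR m / IZR (n + m) * W (n - 1) (m - 1).
Proof.
  intros Hm Hn. unfold W at 1.
  replace (Z.to_nat (n + m)) with (S (Z.to_nat (n + m - 1))) by lia. simpl.
  replace (m <=? 0)%Z with false by lia; replace (n <? m)%Z with false by lia.
  unfold W.
  rewrite (W_fuel_stable _ (Z.to_nat (n - 2 + m)) (n - 2)%Z m),
          (W_fuel_stable _ (Z.to_nat (n - 1 + (m - 1))) (n - 1)%Z (m - 1)%Z) by lia.
  reflexivity.
Qed.

Lemma scaled_sqrt_le (a b x y : R) :
  0 <= a -> 0 <= b -> 0 <= x -> 0 <= y -> a * a * x <= b * b * y ->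
  a * sqrt x <= b * sqrt y.
Proof.
  intros Ha Hb Hx Hy H.
  rewrite <- (sqrt_square a Ha), <- (sqrt_square b Hb), <- !sqrt_mult by nra.
  now apply sqrt_le_1_alt.
Qed.

Lemma div_le_of_le_mul (p q t : R) : 0 < q -> p <= t * q -> p / q <= t.
Proof.
  intros Hq H. apply (Rmult_le_reg_r q); [exact Hq|].
  unfold Rdiv. rewrite Rmult_assoc, Rinv_l by lra. lra.
Qed.

Definition mafia_bound (k n m : Z) : R :=
  sqrt (IZR (2 * k - 2)) / IZR k * (IZR m / sqrt (IZR (n + m))).

Lemma mafia_bound_eq (k n m : Z) : (1 <= k)%Z -> (1 <= n + m)%Z ->
  mafia_bound k n m = sqrt (IZR (2 * k - 2)) * IZR m / (IZR k * sqrt (IZR (n + m))).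
Proof.
  intros Hk Hs. unfold mafia_bound.
  assert (0 < sqrt (IZR (n + m))) by (apply sqrt_lt_R0, IZR_lt; lia).
  assert (1 <= IZR k) by (apply IZR_le; lia).
  field; lra.
Qed.

Lemma mafia_bound_le_one (k n m : Z) :
  (1 <= m <= k)%Z -> (m - 2 <= n < m)%Z -> (1 <= n + m)%Z ->
  mafia_bound k n m <= 1.
Proof.
  intros Hm Hn Hs.
  assert (Hint : ((2 * k - 2) * (m * m) <= k * k * (n + m))%Z).
  { destruct (Z.eq_dec m 1) as [-> | Hm1]; [nia|].
    assert (0 <= (k - m) * ((k - 1) * (m - 1) - 1))%Z by (apply Z.mul_nonneg_nonneg; nia).
    nia. }
  rewrite mafia_bound_eq by lia.
  apply div_le_of_le_mul; [apply Rmult_lt_0_compat; [apply IZR_lt; lia | apply sqrt_lt_R0, IZR_lt; lia]|].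
  rewrite Rmult_1_l, Rmult_comm.
  apply scaled_sqrt_le; try (apply IZR_le; lia).
  rewrite <- !mult_IZR. apply IZR_le. lia.
Qed.

Lemma mafia_bound_one_one (k : Z) : (1 <= k)%Z -> mafia_bound k 1 1 <= 1 / 2.
Proof.
  intros Hk.
  rewrite mafia_bound_eq by lia.
  apply div_le_of_le_mul; [apply Rmult_lt_0_compat; [apply IZR_lt; lia | apply sqrt_lt_R0, IZR_lt; lia]|].
  assert (H : 2 * sqrt (IZR (2 * k - 2)) <= IZR k * sqrt (IZR (1 + 1))).
  { apply scaled_sqrt_le; try lra; try (apply IZR_le; lia).
    rewrite <- !mult_IZR. apply IZR_le. pose proof (Z.square_nonneg (k - 2)). lia. }
  lra.
Qed.

(* The inequality behind the inductive step: sqrt(s(s-2)) <= s-1. *)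
Lemma sqrt_decay (s : R) : 2 <= s -> s * sqrt (s - 2) <= (s - 1) * sqrt s.
Proof. intros Hs. apply scaled_sqrt_le; nra. Qed.

Lemma mafia_bound_step (k n m : Z) : (1 <= k)%Z -> (0 <= m)%Z -> (3 <= n + m)%Z ->
  mafia_bound k n m <= IZR n / IZR (n + m) * mafia_bound k (n - 2) m
                     + IZR m / IZR (n + m) * mafia_bound k (n - 1) (m - 1).
Proof.
  intros Hk Hm Hs. unfold mafia_bound.
  replace (n - 2 + m)%Z with (n + m - 2)%Z by ring.
  replace (n - 1 + (m - 1))%Z with (n + m - 2)%Z by ring.
  rewrite minus_IZR with (n := (n + m)%Z), (minus_IZR m 1).
  set (c := sqrt (IZR (2 * k - 2)) / IZR k).
  assert (Hc : 0 <= c).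
  { apply Rmult_le_pos; [apply sqrt_pos | apply Rlt_le, Rinv_0_lt_compat, IZR_lt; lia]. }
  assert (HM : 0 <= IZR m) by (apply IZR_le; lia).
  assert (HS : 3 <= IZR (n + m)) by (apply IZR_le; lia).
  replace (IZR n) with (IZR (n + m) - IZR m) by (rewrite plus_IZR; ring).
  set (s := IZR (n + m)) in *.
  assert (Hq : 0 < sqrt s) by (apply sqrt_lt_R0; lra).
  assert (Hr : 0 < sqrt (s - 2)) by (apply sqrt_lt_R0; lra).
  assert (Hkey := sqrt_decay s ltac:(lra)).
  replace ((s - IZR m) / s * (c * (IZR m / sqrt (s - 2)))
           + IZR m / s * (c * ((IZR m - 1) / sqrt (s - 2))))
    with (c * IZR m * ((s - 1) / (s * sqrt (s - 2)))) by (field; lra).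
  replace (c * (IZR m / sqrt s)) with (c * IZR m * (1 / sqrt s)) by (field; lra).
  apply Rmult_le_compat_l; [nra|].
  apply (Rmult_le_reg_r (sqrt s * (s * sqrt (s - 2)))); [nra|].
  replace (1 / sqrt s * (sqrt s * (s * sqrt (s - 2)))) with (s * sqrt (s - 2)) by (field; lra).
  replace ((s - 1) / (s * sqrt (s - 2)) * (sqrt s * (s * sqrt (s - 2))))
    with ((s - 1) * sqrt s) by (field; lra).
  exact Hkey.
Qed.

Lemma mafia_bound_no_mafia (k n : Z) : mafia_bound k n 0 = 0.
Proof. unfold mafia_bound, Rdiv. rewrite Rmult_0_l. ring. Qed.

Lemma W_above_bound (k : Z) : (1 <= k)%Z ->
  forall (N : nat) (n m : Z), (n + m <= Z.of_nat N)%Z ->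
  (0 <= m <= k)%Z -> (m - 2 <= n)%Z -> (1 <= n + m)%Z ->
  mafia_bound k n m <= W n m.
Proof.
  intros Hk N. induction N as [|N IH]; intros n m HN Hm Hn Hs; [lia|].
  destruct (Z.eq_dec m 0) as [-> | Hm0].
  { rewrite mafia_bound_no_mafia, W_no_mafia by lia. lra. }
  destruct (Z_lt_le_dec n m) as [Hlt | Hge].
  { rewrite W_mafia_majority by lia. apply mafia_bound_le_one; lia. }
  destruct (Z.eq_dec (n + m) 2) as [Hs2 | Hs3].
  { assert (n = 1%Z /\ m = 1%Z) as [-> ->] by lia.
    rewrite W_step, W_mafia_majority, W_no_mafia by lia.
    replace (IZR 1 / IZR (1 + 1) * 1 + IZR 1 / IZR (1 + 1) * 0) with (1 / 2) by (simpl; field).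
    now apply mafia_bound_one_one. }
  assert (Hcivil := IH (n - 2)%Z m ltac:(lia) ltac:(lia) ltac:(lia) ltac:(lia)).
  assert (Hmafia := IH (n - 1)%Z (m - 1)%Z ltac:(lia) ltac:(lia) ltac:(lia) ltac:(lia)).
  assert (Hw1 : 0 <= IZR n / IZR (n + m))
    by (apply Rmult_le_pos; [apply IZR_le | apply Rlt_le, Rinv_0_lt_compat, IZR_lt]; lia).
  assert (Hw2 : 0 <= IZR m / IZR (n + m))
    by (apply Rmult_le_pos; [apply IZR_le | apply Rlt_le, Rinv_0_lt_compat, IZR_lt]; lia).
  rewrite W_step by lia.
  eapply Rle_trans; [apply mafia_bound_step; lia|].
  apply Rplus_le_compat; apply Rmult_le_compat_l; assumption.
Qed.

Theorem theorem2 (k : Z) (hk : (1 <= k)%Z) :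
  forall n m : Z, (m <= n)%Z -> (1 <= m)%Z -> (m <= k)%Z ->
    W n m >= sqrt (IZR (2 * k - 2)) / IZR k * (IZR m / sqrt (IZR (n + m))).
Proof.
  intros n m Hmn Hm Hmk.
  apply Rle_ge, (W_above_bound k hk (Z.to_nat (n + m))); lia.
Qed.
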